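(* Let $(X,T)$ and $(X',T')$ be minimal Cantor systems such that $(X',T')$ is a factor of $(X,T)$. Then $\mathbb P(X',T')\subseteq\mathbb P(X,T)$.
   Context: A minimal Cantor system is a pair $(X,T)$ where $X$ is a Cantor space, $T:X\to X$ a homeomorphism, and every orbit is dense. $(X',T')$ is a factor of $(X,T)$ if there is a continuous onto $\pi:X\to X'$ with $\pi\circ T=T'\circ\pi$. For $x\in X$, clopen $U$ and $p\ge1$, $\mathrm{PS}_p(x,U)=\{k\in\mathbb Z : T^{k+np}x\in U\ \forall n\in\mathbb Z\}$. An integer $p$ is an essential period of $x$ for $U$ if $\mathrm{PS}_p(x,U)\neq\emptyset$ and $p$ divides every $q\in\mathbb Z$ satisfying $\mathrm{PS}_p(x,U)=\mathrm{PS}_p(x,U)-q$. $\mathbb P(X,T)=\{p\geq 2 : p \text{ is an essential period of some } x\in X \text{ for some clopen } U\}$. *)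

From Stdlib Require Import ZArith Arith.
Open Scope Z_scope.

Definition is_topology {X : Type} (op : (X -> Prop) -> Prop) : Prop :=
  op (fun _ => True) /\
  (forall U V, op U -> op V -> op (fun x => U x /\ V x)) /\
  (forall F : (X -> Prop) -> Prop,
      (forall U, F U -> op U) -> op (fun x => exists U, F U /\ U x)).

Definition continuous {A B : Type} (opA : (A -> Prop) -> Prop)
  (opB : (B -> Prop) -> Prop) (f : A -> B) : Prop :=
  forall V, opB V -> opA (fun x => V (f x)).

Definition homeomorphism {A B : Type} (opA : (A -> Prop) -> Prop)
  (opB : (B -> Prop) -> Prop) (f : A -> B) (g : B -> A) : Prop :=
  (forall x, g (f x) = x) /\ (forall y, f (g y) = y) /\
  continuous opA opB f /\ continuous opB opA g.

(* The Cantor set {0,1}^N with the product topology. *)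
Definition cantor_open (U : (nat -> bool) -> Prop) : Prop :=
  forall x, U x -> exists n : nat,
    forall y, (forall i, (i < n)%nat -> y i = x i) -> U y.

Definition CantorSpace {X : Type} (op : (X -> Prop) -> Prop) : Prop :=
  is_topology op /\ exists f g, homeomorphism op cantor_open f g.

Definition clopen {X : Type} (op : (X -> Prop) -> Prop) (U : X -> Prop) : Prop :=
  op U /\ op (fun x => ~ U x).

Definition iterZ {X : Type} (T Ti : X -> X) (k : Z) (x : X) : X :=
  match k with
  | Z0 => x
  | Zpos p => Nat.iter (Pos.to_nat p) T x
  | Zneg p => Nat.iter (Pos.to_nat p) Ti x
  end.

Definition minimal {X : Type} (op : (X -> Prop) -> Prop) (T Ti : X -> X) : Prop :=
  forall x U, op U -> (exists y, U y) -> exists k : Z, U (iterZ T Ti k x).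

Definition minimal_cantor_system {X : Type} (op : (X -> Prop) -> Prop)
  (T Ti : X -> X) : Prop :=
  CantorSpace op /\ homeomorphism op op T Ti /\ minimal op T Ti.

Definition is_factor {X X' : Type} (op : (X -> Prop) -> Prop)
  (op' : (X' -> Prop) -> Prop) (T : X -> X) (T' : X' -> X') : Prop :=
  exists pi : X -> X', continuous op op' pi /\
    (forall y, exists x, pi x = y) /\ (forall x, pi (T x) = T' (pi x)).

Definition PS {X : Type} (T Ti : X -> X) (p : Z) (x : X) (U : X -> Prop)
  (k : Z) : Prop :=
  forall n : Z, U (iterZ T Ti (k + n * p) x).

Definition essential_period {X : Type} (T Ti : X -> X) (p : Z) (x : X)
  (U : X -> Prop) : Prop :=
  1 <= p /\
  (exists k, PS T Ti p x U k) /\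
  (forall q : Z,
     (forall k, PS T Ti p x U k <-> exists k', PS T Ti p x U k' /\ k = k' - q) ->
     (p | q)%Z).

Definition PP {X : Type} (op : (X -> Prop) -> Prop) (T Ti : X -> X) (p : Z) : Prop :=
  2 <= p /\ exists x U, clopen op U /\ essential_period T Ti p x U.

(* Pull the clopen set back along the factor map [pi] and the point back to
   any preimage [x] of [x'].  Since [pi] intertwines the integer iterates,
   [PS_p(x, pi^-1 U') = PS_p(x', U')] as sets of integers, and an essential
   period is a property of that set alone. *)
From Stdlib Require Import ZArith.

Lemma iter_semiconj {A B : Type} (f : A -> A) (g : B -> B) (pi : A -> B) :
  (forall a, pi (f a) = g (pi a)) ->
  forall n a, pi (Nat.iter n f a) = Nat.iter n g (pi a).
Proof.
  intros Hpi n; induction n as [|n IH]; intros a; simpl; [reflexivity|].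
  rewrite Hpi, IH; reflexivity.
Qed.

Lemma iterZ_semiconj {X X' : Type} (T Ti : X -> X) (T' Ti' : X' -> X')
  (pi : X -> X') :
  (forall y, T (Ti y) = y) -> (forall z, Ti' (T' z) = z) ->
  (forall x, pi (T x) = T' (pi x)) ->
  forall k x, pi (iterZ T Ti k x) = iterZ T' Ti' k (pi x).
Proof.
  intros TTi Ti'T' Hpi.
  assert (Hpi_inv : forall y, pi (Ti y) = Ti' (pi y)).
  { intros y. rewrite <- (TTi y) at 2. rewrite Hpi, Ti'T'. reflexivity. }
  intros [|q|q] x; simpl; [reflexivity | apply iter_semiconj; auto ..].
Qed.

Lemma clopen_preimage {X X' : Type} (op : (X -> Prop) -> Prop)
  (op' : (X' -> Prop) -> Prop) (pi : X -> X') (U' : X' -> Prop) :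
  continuous op op' pi -> clopen op' U' -> clopen op (fun x => U' (pi x)).
Proof.
  intros Hc [HU' HnU']. split; [exact (Hc _ HU') | exact (Hc _ HnU')].
Qed.

Lemma PS_preimage {X X' : Type} (T Ti : X -> X) (T' Ti' : X' -> X')
  (pi : X -> X') (U' : X' -> Prop) (p : Z) (x : X) :
  (forall k y, pi (iterZ T Ti k y) = iterZ T' Ti' k (pi y)) ->
  forall k, PS T Ti p x (fun y => U' (pi y)) k <-> PS T' Ti' p (pi x) U' k.
Proof.
  intros Hpi k; unfold PS. setoid_rewrite Hpi. reflexivity.
Qed.

Lemma essential_period_ext {X X' : Type} (T Ti : X -> X) (T' Ti' : X' -> X')
  (p : Z) (x : X) (U : X -> Prop) (x' : X') (U' : X' -> Prop) :
  (forall k, PS T Ti p x U k <-> PS T' Ti' p x' U' k) ->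
  essential_period T' Ti' p x' U' -> essential_period T Ti p x U.
Proof.
  intros E [Hp [[k Hk] Hdiv]].
  split; [exact Hp|]. split; [exists k; apply E, Hk|].
  intros q Hq. apply Hdiv. intros j.
  rewrite <- E, Hq. setoid_rewrite E. reflexivity.
Qed.

Theorem mainTheorem4 (X X' : Type)
  (op : (X -> Prop) -> Prop) (T Ti : X -> X)
  (op' : (X' -> Prop) -> Prop) (T' Ti' : X' -> X') :
  minimal_cantor_system op T Ti ->
  minimal_cantor_system op' T' Ti' ->
  is_factor op op' T T' ->
  forall p : Z, PP op' T' Ti' p -> PP op T Ti p.
Proof.
  intros [_ [[_ [TTi _]] _]] [_ [[Ti'T' _] _]] [pi [Hc [Hsurj Hpi]]] p
    [Hp [x' [U' [HU' Hess]]]].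
  destruct (Hsurj x') as [x <-].
  split; [exact Hp|]. exists x, (fun y => U' (pi y)). split.
  - exact (clopen_preimage op op' pi U' Hc HU').
  - apply (essential_period_ext T Ti T' Ti' p x _ (pi x) U'); [|exact Hess].
    apply PS_preimage, iterZ_semiconj; assumption.
Qed.
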